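(* Suppose $F_0$ has a unique fixed point $\bar x$ in $V$, and that for some $m\ge0$ the map $F_m$ is monotone (nondecreasing or nonincreasing) in each of its arguments. Let $F_m^*$, the monotonicity types, $\le_\tau$, $P_\tau$, $P_\tau^t$ be as in the context, and assume: $F_m^*$ has a unique fixed point; $F_m^*$ has no pseudo-fixed points; and for every initial condition $X_0\in V^{k+m}$ there exist $x,y\in V$ with $$x\le y,\quad x<F_m^*(P_\tau(x,y)),\quad F_m^*(P_\tau^t(x,y))<y,\quad P_\tau(x,y)\le_\tau X_0\le_\tau P_\tau^t(x,y).$$ Then $\bar x$ is a global attractor of $x_{n+1}=F_0(x_n,\dots,x_{n-k+1})$: every solution with initial values in $V$ converges to $\bar x$.
   Context: Let $k\ge 2$, $V\subseteq\mathbb{R}$ be $\mathbb{R}$ or $[0,\infty)$, and $F_0:V^k\to V$ continuous. Define $F_m:V^k\to V$ recursively by $F_{m+1}(u_1,\dots,u_k)=F_m(F_0(u_1,\dots,u_k),u_1,\dots,u_{k-1})$; the $F_m$-equation is $z_{n+1}=F_m(z_{n-m},\dots,z_{n-m-k+1})$. Define $F_m^*:V^{k+m}\to V$ by $F_m^*(u_1,\dots,u_{k+m})=F_m(u_{m+1},\dots,u_{m+k})$, so the $F_m$-equation reads $z_{n+1}=F_m^*(z_n,\dots,z_{n-m-k+1})$, with initial condition $X_0=(z_0,z_{-1},\dots,z_{-m-k+1})\in V^{k+m}$. To each coordinate $i\in\{1,\dots,k+m\}$ assign a type ''increasing'' or ''decreasing'' such that $F_m^*$ is nondecreasing (resp.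 nonincreasing) in its $i$-th argument when the type is increasing (resp. decreasing); for the first $m$ coordinates, on which $F_m^*$ is constant, any type may be assigned. The partial order $\le_\tau$ on $V^{k+m}$: $(x_1,\dots,x_{k+m})\le_\tau(y_1,\dots,y_{k+m})$ iff $x_i\le y_i$ for coordinates of increasing type and $x_i\ge y_i$ for coordinates of decreasing type. For $x,y\in V$, $P_\tau(x,y)=(u_1,\dots,u_{k+m})$ with $u_i=x$ for increasing-type coordinates and $u_i=y$ for decreasing-type coordinates, and $P_\tau^t(x,y)$ is obtained by interchanging $x$ and $y$. A pseudo-fixed point of $F_m^*$ is a pair $(x,y)\in V^2$ with $x\ne y$, $x=F_m^*(P_\tau(x,y))$ and $y=F_m^*(P^t_\tau(x,y))$. A fixed point of $F_m^*$ is $x$ with $F_m^*(x,\dots,x)=x$. *)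

From mathcomp Require Import all_boot all_order all_algebra.
From mathcomp Require Import reals.
Set Implicit Arguments. Unset Strict Implicit. Unset Printing Implicit Defensive.
Import Order.TTheory GRing.Theory Num.Theory.
Local Open Scope ring_scope.

Section Defs.
Variable R : realType.

(* The domain V: V = R if nonneg = false, V = [0,oo) if nonneg = true. *)
Definition inV (nonneg : bool) (x : R) : Prop := if nonneg then (0 <= x)%R : Prop else True.

(* Extend a k-tuple (indexed by 'I_k, index 0 = first argument u_1) to nat. *)
Definition ext (k : nat) (u : 'I_k -> R) (j : nat) : R :=
  if insub j is Some i then u i else 0.

(* (a, u_1, ..., u_{k-1}) *)
Definition shiftcons (k : nat) (a : R) (u : 'I_k -> R) : 'I_k -> R :=
  fun i => if val i is j.+1 then ext u j else a.

Fixpoint Fm (k : nat) (F0 : ('I_k -> R) -> R) (m : nat) : ('I_k -> R) -> R :=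
  match m with
  | 0 => F0
  | m'.+1 => fun u => Fm F0 m' (shiftcons (F0 u) u)
  end.

(* F_m^*(u_1, ..., u_{m+k}) = F_m(u_{m+1}, ..., u_{m+k}). *)
Definition Fstar (k : nat) (F0 : ('I_k -> R) -> R) (m : nat) (u : 'I_(m + k) -> R) : R :=
  Fm F0 m (fun i : 'I_k => u (rshift m i)).

(* type assignment: tau i = true means "increasing", false "decreasing" *)
Definition le_tau (n : nat) (tau : 'I_n -> bool) (x y : 'I_n -> R) : Prop :=
  forall i, if tau i then x i <= y i else y i <= x i.

Definition P_tau (n : nat) (tau : 'I_n -> bool) (x y : R) : 'I_n -> R :=
  fun i => if tau i then x else y.

Definition Pt_tau (n : nat) (tau : 'I_n -> bool) (x y : R) : 'I_n -> R :=
  P_tau tau y x.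

Definition monotone_in_arg (nonneg : bool) (n : nat) (G : ('I_n -> R) -> R)
  (i : 'I_n) (incr : bool) : Prop :=
  forall u v : 'I_n -> R, (forall j, inV nonneg (u j)) -> (forall j, inV nonneg (v j)) ->
    (forall j, j != i -> u j = v j) -> u i <= v i ->
    if incr then G u <= G v else G v <= G u.

Definition continuous_on_V (nonneg : bool) (n : nat) (G : ('I_n -> R) -> R) : Prop :=
  forall u, (forall j, inV nonneg (u j)) ->
  forall eps : R, 0 < eps -> exists2 delta : R, 0 < delta &
    forall v, (forall j, inV nonneg (v j)) -> (forall j, `|v j - u j| < delta) ->
      `|G v - G u| < eps.

Definition is_pseudo_fixed_point (nonneg : bool) (n : nat) (G : ('I_n -> R) -> R)
  (tau : 'I_n -> bool) (x y : R) : Prop :=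
  inV nonneg x /\ inV nonneg y /\ x <> y /\ x = G (P_tau tau x y) /\ y = G (Pt_tau tau x y).

(* x : nat -> R encodes a solution: x 0, ..., x (k-1) are x_{-k+1}, ..., x_0 *)
Definition is_solution (nonneg : bool) (k : nat) (F0 : ('I_k -> R) -> R) (x : nat -> R) : Prop :=
  (forall j, (j < k)%N -> inV nonneg (x j)) /\
  forall n, x (n + k)%N = F0 (fun i : 'I_k => x (n + k - 1 - i)%N).

Definition converges_to (x : nat -> R) (l : R) : Prop :=
  forall eps : R, 0 < eps -> exists N, forall n, (N <= n)%N -> `|x n - l| < eps.

End Defs.

From mathcomp Require Import all_boot all_order all_algebra.
From mathcomp Require Import boolp classical_sets reals.
From mathcomp Require Import zify lra.
Set Implicit Arguments. Unset Strict Implicit. Unset Printing Implicit Defensive.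
Import Order.TTheory GRing.Theory Num.Theory.
Local Open Scope ring_scope.

(* Start from the box [a, b] given for the initial window and iterate
   (a, b) |-> (F_m^*(P_tau(a, b)), F_m^*(P^t_tau(a, b))).  Monotonicity of F_m^*
   makes the lower ends nondecreasing and the upper ends nonincreasing, and
   traps the j-th block of m + k terms of the solution in the j-th box.  By
   continuity the limits (L, U) satisfy L = F_m^*(P_tau(L, U)) and
   U = F_m^*(P^t_tau(L, U)); since there is no pseudo-fixed point, L = U, which
   is then the fixed point of F_m^*, i.e. xbar.  The solution is squeezed to it. *)

Section Convergence.
Variable R : realType.
Implicit Types (s a b z : nat -> R) (l M : R).

Lemma converges_to_unique s l l' : converges_to s l -> converges_to s l' -> l = l'.
Proof.
move=> sl sl'; apply/eqP; rewrite -subr_eq0 -normr_le0; apply/ler_addgt0Pr => e e0.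
have e2 : 0 < e / 2 by lra.
have [N hN] := sl _ e2; have [N' hN'] := sl' _ e2.
have := hN _ (leq_maxl N N'); have := hN' _ (leq_maxr N N').
by rewrite add0r ler_norml !ltr_norml; lra.
Qed.

Lemma converges_to_succ s l : converges_to s l -> converges_to (fun n => s n.+1) l.
Proof. by move=> sl e /sl[N hN]; exists N => n Nn; apply/hN/leqW. Qed.

Lemma converges_to_ge s l M : (forall n, M <= s n) -> converges_to s l -> M <= l.
Proof.
move=> Ms sl; apply/ler_addgt0Pr => e e0; have [N hN] := sl e e0.
by have := hN N (leqnn N); have := Ms N; rewrite ltr_norml; lra.
Qed.

Lemma converges_to_opp s l : converges_to s l -> converges_to (fun n => - s n) (- l).
Proof.
by move=> sl e /sl[N hN]; exists N => n /hN; rewrite -opprD normrN.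
Qed.

Lemma nondecreasing_converges_to s M :
  (forall n, s n <= s n.+1) -> (forall n, s n <= M) -> exists l, converges_to s l.
Proof.
move=> s_incr sM; have s_homo := homo_leq le_refl le_trans s_incr.
have hs : has_sup (range s) by split; [exists (s 0%N), 0%N | exists M => _ [n _ <-]].
exists (sup (range s)) => e e0; have [_ [N _ <-] hN] := sup_adherent e0 hs.
exists N => n Nn; have := sup_upper_bound hs (ex_intro2 _ _ n I erefl).
by have := s_homo _ _ Nn; rewrite ltr_norml; lra.
Qed.

Lemma nonincreasing_converges_to s M :
  (forall n, s n.+1 <= s n) -> (forall n, M <= s n) -> exists l, converges_to s l.
Proof.
move=> s_decr Ms.
have [l hl] : exists l, converges_to (fun n => - s n) l.
  by apply: (@nondecreasing_converges_to _ (- M)) => n; rewrite lerN2.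
by exists (- l) => e /(converges_to_opp hl)[N hN]; exists N => n /hN; rewrite opprK.
Qed.

Lemma converges_to_squeeze (f : nat -> nat) a b z l :
  (forall j n, (f j <= n)%N -> a j <= z n <= b j) ->
  converges_to a l -> converges_to b l -> converges_to z l.
Proof.
move=> abz al bl e e0; have [Na hNa] := al e e0; have [Nb hNb] := bl e e0.
exists (f (maxn Na Nb)) => n /abz/andP[h1 h2].
have := hNa _ (leq_maxl Na Nb); have := hNb _ (leq_maxr Na Nb).
by rewrite !ltr_norml; lra.
Qed.

Lemma converges_to_continuous_on_V nonneg n (G : ('I_n -> R) -> R)
    (u : nat -> 'I_n -> R) (v : 'I_n -> R) :
  continuous_on_V nonneg G -> (forall j i, inV nonneg (u j i)) ->
  (forall i, inV nonneg (v i)) -> (forall i, converges_to (u^~ i) (v i)) ->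
  converges_to (fun j => G (u j)) (G v).
Proof.
move=> Gc uV vV uv e e0; have [d d0 Gd] := Gc v vV e e0.
have [N hN] := fin_all_exists (fun i => uv i d d0).
exists (\max_i N i) => j Nj; apply: Gd => // i.
by apply: hN; exact: leq_trans (leq_bigmax i) Nj.
Qed.

End Convergence.

Lemma inV_le (R : realType) nonneg (a b : R) : inV nonneg a -> a <= b -> inV nonneg b.
Proof. by case: nonneg => //= a0; apply: le_trans. Qed.

Section TypedOrder.
Variables (R : realType) (nonneg : bool) (n : nat) (tau : 'I_n -> bool).

Lemma P_tau_inV (a b : R) :
  inV nonneg a -> inV nonneg b -> forall i, inV nonneg (P_tau tau a b i).
Proof. by move=> aV bV i; rewrite /P_tau; case: (tau i). Qed.

Lemma le_tau_P_tau (a b a' b' : R) :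
  a <= a' -> b' <= b -> le_tau tau (P_tau tau a b) (P_tau tau a' b').
Proof. by move=> aa' b'b i; rewrite /P_tau; case: (tau i). Qed.

Lemma le_tau_box (a b : R) X :
  (forall i, a <= X i <= b) <->
  le_tau tau (P_tau tau a b) X /\ le_tau tau X (Pt_tau tau a b).
Proof.
rewrite /Pt_tau /P_tau; split=> [abX | [aX Xb] i].
  by split=> i; have /andP[aX Xb] := abX i; case: (tau i).
by move: (aX i) (Xb i); case: (tau i) => /= -> ->.
Qed.

Lemma converges_to_P_tau (a b : nat -> R) l l' :
  converges_to a l -> converges_to b l' ->
  forall i, converges_to (fun j => P_tau tau (a j) (b j) i) (P_tau tau l l' i).
Proof. by move=> al bl' i; rewrite /P_tau; case: (tau i). Qed.

Definition monotone_le_tau (G : ('I_n -> R) -> R) : Prop :=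
  forall U W, (forall i, inV nonneg (U i)) -> (forall i, inV nonneg (W i)) ->
    le_tau tau U W -> G U <= G W.

Lemma monotone_le_tau_of_args (G : ('I_n -> R) -> R) :
  (forall i, monotone_in_arg nonneg G i (tau i)) -> monotone_le_tau G.
Proof.
move=> Gmono U W UV WV UW.
(* Move from U to W one coordinate at a time. *)
pose H t (i : 'I_n) : R := if (i < t)%N then W i else U i.
have HV t i : inV nonneg (H t i) by rewrite /H; case: ifP.
suff H_incr t : G (H t) <= G (H t.+1).
  have -> : U = H 0%N by apply: funext.
  have -> : W = H n by apply: funext => i; rewrite /H ltn_ord.
  exact: (homo_leq le_refl le_trans H_incr (leq0n n)).
case: (ltnP t n) => [tn | nt]; last first.
  suff -> : H t = H t.+1 by [].
  apply: funext => i; rewrite /H.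
  by rewrite (leq_trans (ltn_ord i) nt) (leq_trans (ltn_ord i) (leqW nt)).
pose t' := Ordinal tn.
have H_off i : i != t' -> H t i = H t.+1 i.
  move=> it; have itn : (i != t :> nat) by apply: contra it => /eqP it; apply/eqP/val_inj.
  by rewrite /H ltnS (leq_eqVlt i) (negbTE itn).
have Ht : H t t' = U t' by rewrite /H ltnn.
have Ht1 : H t.+1 t' = W t' by rewrite /H ltnSn.
have := UW t'; case tau_t: (tau t') => UWt.
  by have := Gmono t' _ _ (HV t) (HV t.+1) H_off; rewrite Ht Ht1 tau_t; apply.
have H_off' i : i != t' -> H t.+1 i = H t i by move/H_off.
by have := Gmono t' _ _ (HV t.+1) (HV t) H_off'; rewrite Ht Ht1 tau_t; apply.
Qed.

End TypedOrder.

(* [window K z n] is the stretch z (n + K - 1), ..., z n, most recent term first. *)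
Definition window (T : Type) (K : nat) (z : nat -> T) (n : nat) : 'I_K -> T :=
  fun i => z (n + K - 1 - i)%N.
Arguments window {T} K z n.

Section IteratedMap.
Variables (R : realType) (nonneg : bool) (k : nat) (F0 : ('I_k -> R) -> R).
Hypothesis F0_inV : forall u, (forall j, inV nonneg (u j)) -> inV nonneg (F0 u).
Implicit Type u : 'I_k -> R.

Lemma shiftcons_succ (a : R) u j (jk : (j.+1 < k)%N) :
  shiftcons a u (Ordinal jk) = u (Ordinal (ltnW jk)).
Proof. by rewrite /shiftcons /= /ext (insubT (fun i => i < k)%N (ltnW jk)). Qed.

Lemma shiftcons_inV (a : R) u :
  inV nonneg a -> (forall j, inV nonneg (u j)) -> forall j, inV nonneg (shiftcons a u j).
Proof. by move=> aV uV [[|j] jk] //; rewrite shiftcons_succ. Qed.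

Lemma Fm_inV m u : (forall j, inV nonneg (u j)) -> inV nonneg (Fm F0 m u).
Proof.
elim: m u => [|m IHm] u uV /=; first exact: F0_inV.
by apply: IHm; apply: shiftcons_inV => //; apply: F0_inV.
Qed.

Lemma Fstar_inV m (u : 'I_(m + k) -> R) :
  (forall j, inV nonneg (u j)) -> inV nonneg (Fstar F0 u).
Proof. by move=> uV; apply: Fm_inV. Qed.

Lemma Fm_fixed (z : R) : F0 (fun=> z) = z -> forall m, Fm F0 m (fun=> z) = z.
Proof.
move=> F0z; elim=> [|m IHm] //=; rewrite F0z -[RHS]IHm; congr (Fm F0 m _).
by apply: funext => -[[|j] jk] //; rewrite shiftcons_succ.
Qed.

Lemma Fm_continuous m :
  continuous_on_V nonneg F0 -> continuous_on_V nonneg (Fm F0 m).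
Proof.
move=> F0c; elim: m => [|m IHm] //= u uV e e0.
have [d1 d1_0 hd1] := IHm _ (shiftcons_inV (F0_inV uV) uV) e e0.
have [d2 d2_0 hd2] := F0c u uV d1 d1_0.
exists (Num.min d1 d2) => [|v vV vu]; first by rewrite lt_min d1_0.
have vu1 i : `|v i - u i| < d1 by have := vu i; rewrite lt_min => /andP[].
have vu2 i : `|v i - u i| < d2 by have := vu i; rewrite lt_min => /andP[].
apply: hd1 => [|[[|j] jk]]; first exact: shiftcons_inV (F0_inV vV) vV.
  exact: hd2.
by rewrite !shiftcons_succ.
Qed.

Lemma Fstar_continuous m :
  continuous_on_V nonneg F0 -> continuous_on_V nonneg (@Fstar R k F0 m).
Proof.
move=> F0c u uV e e0.
have [d d0 hd] := Fm_continuous m F0c (fun i => uV (rshift m i)) e0.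
by exists d => // v vV vu; apply: hd.
Qed.

(* F_m^* ignores its first m arguments, so any type may be assigned to them. *)
Lemma Fstar_monotone_in_head_arg m (i : 'I_(m + k)) (incr : bool) :
  (i < m)%N -> monotone_in_arg nonneg (@Fstar R k F0 m) i incr.
Proof.
move=> im u v _ _ uv _.
have -> : Fstar F0 u = Fstar F0 v; last by case: incr.
congr (Fm F0 m _); apply: funext => j; apply: uv.
by apply: contraTneq im => <-; rewrite -leqNgt leq_addr.
Qed.

Lemma Fstar_monotone_le_tau m (tau : 'I_(m + k) -> bool) :
  (forall i : 'I_(m + k), (m <= i)%N -> monotone_in_arg nonneg (@Fstar R k F0 m) i (tau i)) ->
  monotone_le_tau nonneg tau (@Fstar R k F0 m).
Proof.
move=> Fstar_mono; apply: monotone_le_tau_of_args => i.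
by case: (leqP m i) => [/Fstar_mono | /Fstar_monotone_in_head_arg].
Qed.

Variable x : nat -> R.
Hypothesis x_solution : is_solution nonneg F0 x.

Lemma solution_inV n : inV nonneg (x n).
Proof.
case: x_solution => x_init x_step; elim/ltn_ind: n => n IHn.
case: (ltnP n k) => [nk | kn]; first exact: x_init.
rewrite -(subnK kn) x_step; apply: F0_inV => i; apply: IHn.
by have := ltn_ord i; lia.
Qed.

Lemma Fm_window_solution m n : Fm F0 m (window k x n) = x (n + m + k)%N.
Proof.
case: x_solution => _ x_step; elim: m n => [|m IHm] n /=; first by rewrite addn0 x_step.
rewrite addnS -addSn -IHm; congr (Fm F0 m _).
apply: funext => -[[|j] jk]; rewrite /window.
  by rewrite /shiftcons /= -x_step; congr x; lia.
by rewrite shiftcons_succ /=; congr x; lia.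
Qed.

Lemma Fstar_window_solution m n :
  x (n + (m + k))%N = Fstar F0 (window (m + k) x n).
Proof.
rewrite addnA -Fm_window_solution; congr (Fm F0 m _).
by apply: funext => i; rewrite /window /=; congr x; lia.
Qed.

End IteratedMap.

Section InvariantBox.
Variables (R : realType) (nonneg : bool) (K : nat) (tau : 'I_K -> bool).
Variable G : ('I_K -> R) -> R.
Hypothesis G_inV : forall u, (forall i, inV nonneg (u i)) -> inV nonneg (G u).
Hypothesis G_mono : monotone_le_tau nonneg tau G.

Lemma monotone_le_tau_box (a b : R) X :
  inV nonneg a -> inV nonneg b -> (forall i, inV nonneg (X i)) ->
  (forall i, a <= X i <= b) -> G (P_tau tau a b) <= G X <= G (Pt_tau tau a b).
Proof.
move=> aV bV XV /(le_tau_box tau)[aX Xb].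
by apply/andP; split; apply: G_mono => //; apply: P_tau_inV.
Qed.

Definition box_step (p : R * R) : R * R :=
  (G (P_tau tau p.1 p.2), G (Pt_tau tau p.1 p.2)).

Variables a b : R.
Hypotheses (aV : inV nonneg a) (bV : inV nonneg b) (ab : a <= b).
Hypotheses (a_step : a <= G (P_tau tau a b)) (b_step : G (Pt_tau tau a b) <= b).

Definition box_iter (j : nat) : R * R := iter j box_step (a, b).
Local Notation lo j := (box_iter j).1.
Local Notation hi j := (box_iter j).2.

Lemma box_iter_invariant j :
  [/\ inV nonneg (lo j), inV nonneg (hi j), lo j <= hi j,
      lo j <= lo j.+1 & hi j.+1 <= hi j].
Proof.
elim: j => [|j [loV hiV lohi lo_incr hi_decr]]; first by [].
have loV' : inV nonneg (lo j.+1) by apply/G_inV/P_tau_inV.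
have hiV' : inV nonneg (hi j.+1) by apply/G_inV/P_tau_inV.
by split=> //; apply: G_mono; try apply: P_tau_inV; try apply: le_tau_P_tau.
Qed.

Hypothesis G_cont : continuous_on_V nonneg G.
Hypothesis G_no_pseudo_fixed_point : forall x y, ~ is_pseudo_fixed_point nonneg G tau x y.

Lemma box_iter_converges : exists l,
  [/\ inV nonneg l, G (fun=> l) = l,
      converges_to (fun j => lo j) l & converges_to (fun j => hi j) l].
Proof.
have loV j : inV nonneg (lo j) by case: (box_iter_invariant j).
have hiV j : inV nonneg (hi j) by case: (box_iter_invariant j).
have lohi j : lo j <= hi j by case: (box_iter_invariant j).
have lo_incr j : lo j <= lo j.+1 by case: (box_iter_invariant j).
have hi_decr j : hi j.+1 <= hi j by case: (box_iter_invariant j).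
have a_lo j : a <= lo j := homo_leq le_refl le_trans lo_incr (leq0n j).
have a_hi j : a <= hi j := le_trans (a_lo j) (lohi j).
have hi_b j : hi j <= b by elim: j => // j; apply: le_trans (hi_decr j).
have [L loL] := nondecreasing_converges_to lo_incr (fun j => le_trans (lohi j) (hi_b j)).
have [U hiU] := nonincreasing_converges_to hi_decr a_hi.
have LV : inV nonneg L := inV_le aV (converges_to_ge a_lo loL).
have UV : inV nonneg U := inV_le aV (converges_to_ge a_hi hiU).
(* By continuity of G, (L, U) is a fixed point of box_step. *)
have L_fix : L = G (P_tau tau L U).
  apply: converges_to_unique (converges_to_succ loL) _.
  apply: converges_to_continuous_on_V G_cont _ (P_tau_inV tau LV UV) _.
    by move=> j; apply: P_tau_inV.
  exact: converges_to_P_tau.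
have U_fix : U = G (Pt_tau tau L U).
  apply: converges_to_unique (converges_to_succ hiU) _.
  apply: converges_to_continuous_on_V G_cont _ (P_tau_inV tau UV LV) _.
    by move=> j; apply: P_tau_inV.
  exact: converges_to_P_tau.
have LU : L = U.
  case: (eqVneq L U) => // /eqP LneU; exfalso.
  by apply: (@G_no_pseudo_fixed_point L U); do !split.
subst U; exists L; split => //.
by rewrite [in RHS]L_fix /P_tau; congr G; apply: funext => i; rewrite if_same.
Qed.

Variable z : nat -> R.
Hypothesis z_inV : forall n, inV nonneg (z n).
Hypothesis z_step : forall n, z (n + K)%N = G (window K z n).
Hypothesis z_init : forall i, a <= window K z 0 i <= b.

Lemma window_step j n :
  (forall i, lo j <= window K z n i <= hi j) -> lo j.+1 <= z (n + K)%N <= hi j.+1.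
Proof.
move=> w_box; have [loV hiV _ _ _] := box_iter_invariant j.
by rewrite z_step; apply: monotone_le_tau_box => // i; apply: z_inV.
Qed.

Lemma solution_in_box n : a <= z n <= b.
Proof.
elim/ltn_ind: n => n IHn; case: (ltnP n K) => [nK | Kn].
  have Kn1 : (K - 1 - n < K)%N by lia.
  have := z_init (Ordinal Kn1); rewrite /window /=.
  by have -> : (0 + K - 1 - (K - 1 - n) = n)%N by lia.
have [_ _ _ lo_incr hi_decr] := box_iter_invariant 0.
have /andP[z_lo z_hi] : lo 1 <= z n <= hi 1.
  by rewrite -(subnK Kn); apply: window_step => i; apply: IHn; have := ltn_ord i; lia.
by rewrite (le_trans lo_incr z_lo) (le_trans z_hi hi_decr).
Qed.

Lemma solution_trapped j n : (j * K <= n)%N -> lo j <= z n <= hi j.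
Proof.
elim: j n => [|j IHj] n jKn; first exact: solution_in_box.
have Kn : (K <= n)%N by move: jKn; rewrite mulSn; lia.
rewrite -(subnK Kn); apply: window_step => i; apply: IHj.
by have := ltn_ord i; move: jKn; rewrite mulSn; lia.
Qed.

Lemma solution_converges : exists l,
  [/\ inV nonneg l, G (fun=> l) = l & converges_to z l].
Proof.
have [l [lV l_fix lo_l hi_l]] := box_iter_converges.
by exists l; split=> //; apply: converges_to_squeeze solution_trapped lo_l hi_l.
Qed.

End InvariantBox.

Theorem mainTheorem9 (R : realType) (nonneg : bool) (k : nat) (F0 : ('I_k -> R) -> R)
  (xbar : R) (m : nat) (tau : 'I_(m + k) -> bool) :
  (2 <= k)%N ->
  (forall u, (forall j, inV nonneg (u j)) -> inV nonneg (F0 u)) ->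
  continuous_on_V nonneg F0 ->
  inV nonneg xbar -> F0 (fun _ => xbar) = xbar ->
  (forall z, inV nonneg z -> F0 (fun _ => z) = z -> z = xbar) ->
  (forall i : 'I_(m + k), (m <= i)%N -> monotone_in_arg nonneg (@Fstar R k F0 m) i (tau i)) ->
  (exists z, inV nonneg z /\ Fstar F0 (fun _ : 'I_(m + k) => z) = z) ->
  (forall z1 z2, inV nonneg z1 -> inV nonneg z2 ->
     Fstar F0 (fun _ : 'I_(m + k) => z1) = z1 -> Fstar F0 (fun _ : 'I_(m + k) => z2) = z2 ->
     z1 = z2) ->
  (forall x y, ~ is_pseudo_fixed_point nonneg (@Fstar R k F0 m) tau x y) ->
  (forall X0 : 'I_(m + k) -> R, (forall i, inV nonneg (X0 i)) ->
     exists x y, inV nonneg x /\ inV nonneg y /\ x <= y /\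
       x < Fstar F0 (P_tau tau x y) /\ Fstar F0 (Pt_tau tau x y) < y /\
       le_tau tau (P_tau tau x y) X0 /\ le_tau tau X0 (Pt_tau tau x y)) ->
  forall x : nat -> R, is_solution nonneg F0 x -> converges_to x xbar.
Proof.
move=> _ F0_inV F0_cont xbarV F0_xbar _ Fstar_mono _ Fstar_fixed_uniq no_pseudo init x x_sol.
have xV := solution_inV F0_inV x_sol.
have [a [b [aV [bV [ab [a_step [b_step x_box]]]]]]] := init (window (m + k) x 0) (fun=> xV _).
have [l [lV l_fixed xl]] := solution_converges (Fstar_inV F0_inV (m := m))
  (Fstar_monotone_le_tau Fstar_mono) aV bV ab (ltW a_step) (ltW b_step)
  (Fstar_continuous F0_inV F0_cont) no_pseudo xV (Fstar_window_solution x_sol m)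
  ((le_tau_box tau a b _).2 x_box).
by rewrite -(Fstar_fixed_uniq l xbar lV xbarV l_fixed (Fm_fixed F0_xbar m)).
Qed.
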